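(* Let $a=a_1+a_2$ be a generalized core-EP decomposition of $a$ (i.e. $a_1^*a_2=a_2a_1=0$, $a_1$ is core invertible and $a_2\in\mathcal{A}^{qnil}$), and let $p=a_1a_1^{\mathrm{core}}$. Then $a=\begin{pmatrix} t&s\\ 0&n\end{pmatrix}_p$, where $t\in (p\mathcal{A}p)^{-1}$, $n\in (p^{\pi}\mathcal{A}p^{\pi})^{qnil}$.
   Context: $\mathcal{A}$ is a complex Banach *-algebra with identity; $\mathcal{A}^{qnil}$ is the set of quasinilpotent elements. An element $a$ is core invertible if there is $x$ with $a=axa$, $x\mathcal{A}=a\mathcal{A}$, $\mathcal{A}x=\mathcal{A}a^*$; such $x$ is unique and denoted $a^{\mathrm{core}}$. For a projection $p$ ($p=p^2=p^*$), $p^\pi=1-p$, and any $x\in\mathcal{A}$ is written as $x=\begin{pmatrix} pxp&px(1-p)\\ (1-p)xp&(1-p)x(1-p)\end{pmatrix}_p$. *)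

From HB Require Import structures.
From mathcomp Require Import all_boot all_order all_algebra.
From mathcomp Require Import complex.
From mathcomp Require Import reals.
Set Implicit Arguments. Unset Strict Implicit. Unset Printing Implicit Defensive.
Import Order.TTheory GRing.Theory Num.Theory.
Local Open Scope ring_scope.

HB.mixin Record isBanachStarAlgebra (R : realType) (A : Type)
    of GRing.Algebra R[i] A := {
  star : A -> A;
  bnorm : A -> R;
  starD : forall x y : A, star (x + y) = star x + star y;
  starZ : forall (c : R[i]) (x : A), star (c *: x) = c^* *: star x;
  starM : forall x y : A, star (x * y) = star y * star x;
  starK : forall x : A, star (star x) = x;
  bnorm_ge0 : forall x : A, 0 <= bnorm x;
  bnorm_eq0 : forall x : A, bnorm x = 0 -> x = 0;
  bnormD : forall x y : A, bnorm (x + y) <= bnorm x + bnorm y;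
  bnormZ : forall (c : R[i]) (x : A),
    ((bnorm (c *: x))%:C)%C = `|c| * ((bnorm x)%:C)%C;
  bnormM : forall x y : A, bnorm (x * y) <= bnorm x * bnorm y;
  bnorm_star : forall x : A, bnorm (star x) = bnorm x;
  bnorm_complete : forall u : nat -> A,
    (forall e : R, 0 < e -> exists N : nat, forall m n : nat,
        (N <= m)%N -> (N <= n)%N -> bnorm (u m - u n) < e) ->
    exists l : A, forall e : R, 0 < e -> exists N : nat, forall n : nat,
        (N <= n)%N -> bnorm (u n - l) < e
}.

#[short(type="banachStarAlgType")]
HB.structure Definition BanachStarAlgebra (R : realType) :=
  { A of GRing.Algebra R[i] A & isBanachStarAlgebra R A }.

Section Defs.
Variables (R : realType) (A : banachStarAlgType R).

Definition invertible (x : A) : Prop := exists y : A, x * y = 1 /\ y * x = 1.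

(* quasinilpotent: sigma(x) is contained in {0}, i.e. lambda - x is
   invertible for every nonzero complex lambda *)
Definition qnil (x : A) : Prop :=
  forall l : R[i], l != 0 -> invertible (l%:A - x).

(* x is core invertible with core inverse y:
   x = x y x, yA = xA, Ay = Ax^* *)
Definition is_core_inverse (x y : A) : Prop :=
  [/\ x = x * y * x,
      (forall z : A, exists w : A, y * z = x * w),
      (forall z : A, exists w : A, x * z = y * w),
      (forall z : A, exists w : A, z * y = w * star x) &
      (forall z : A, exists w : A, z * star x = w * y)].

Definition core_invertible (x : A) : Prop := exists y : A, is_core_inverse x y.

Definition is_projection (p : A) : Prop := p * p = p /\ star p = p.

Definition in_corner (p x : A) : Prop := x = p * x * p.

(* invertibility in the corner algebra pAp (whose identity is p) *)
Definition corner_invertible (p x : A) : Prop :=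
  in_corner p x /\ exists y : A, in_corner p y /\ x * y = p /\ y * x = p.

Definition corner_qnil (p x : A) : Prop :=
  in_corner p x /\
  forall l : R[i], l != 0 -> corner_invertible p (l *: p - x).

(* the 2x2 matrix representation relative to p:
   x = [ pxp  px(1-p) ; (1-p)xp  (1-p)x(1-p) ]_p *)
Definition pmatrix (p x : A) : A * A * A * A :=
  (p * x * p, p * x * (1 - p), (1 - p) * x * p, (1 - p) * x * (1 - p)).

End Defs.

From HB Require Import structures.
From mathcomp Require Import all_boot all_order all_algebra.
From mathcomp Require Import complex.
From mathcomp Require Import reals.
Import Order.TTheory GRing.Theory Num.Theory.
Local Open Scope ring_scope.

(* The core inverse makes p = a1 a1^core a self-adjoint idempotent with
   p a1 = a1, and a1 is invertible in pAp with inverse a1^core. The two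
   orthogonality relations give p a2 = 0 = a2 p, so a = a1 + a2 is upper
   triangular relative to p with corners a1 p and a2. Finally a2 commutes
   with p, hence so do the resolvents (l - a2)^-1, and their compressions to
   (1-p)A(1-p) invert l(1-p) - a2 there. *)

Section RingFacts.
Set Implicit Arguments. Unset Strict Implicit.
Context {T : pzRingType}.
Implicit Types q u v z : T.

Lemma idem_compl q : q * q = q -> (1 - q) * (1 - q) = 1 - q.
Proof. by move=> qq; rewrite mulrBr mulr1 mulrBl mul1r qq subrr subr0. Qed.

Lemma commr_inverse u z q :
  u * z = 1 -> z * u = 1 -> GRing.comm u q -> GRing.comm z q.
Proof.
move=> uz zu uq.
by rewrite /GRing.comm -[z * q]mulr1 -uz mulrA -(mulrA z) -uq mulrA zu mul1r.
Qed.

Lemma mul_idem_comm q u v :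
  q * q = q -> GRing.comm v q -> u * q * (v * q) = u * v * q.
Proof. by move=> qq vq; rewrite -mulrA vq (mulrA q) qq -vq mulrA. Qed.

End RingFacts.

Section Corners.
Set Implicit Arguments. Unset Strict Implicit.
Variables (R : realType) (A : banachStarAlgType R).
Implicit Types p q x y u z : A.

Lemma in_cornerP q : q * q = q ->
  forall x, in_corner q x <-> q * x = x /\ x * q = x.
Proof.
move=> qq x; rewrite /in_corner; split=> [xE | [qx xq]]; last by rewrite qx xq.
by split; rewrite xE -?mulrA ?qq // !mulrA qq.
Qed.

Lemma corner_invertible_mulr q u z :
  q * q = q -> GRing.comm u q -> u * z = 1 -> z * u = 1 ->
  corner_invertible q (u * q).
Proof.
move=> qq uq uz zu; have zq := commr_inverse uz zu uq.
have cornerM v : GRing.comm v q -> in_corner q (v * q).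
  move=> vq; apply/(in_cornerP qq).
  by split; [rewrite vq mulrA qq | rewrite -mulrA qq].
split; first exact: cornerM.
exists (z * q); split; first exact: cornerM.
by rewrite !mul_idem_comm // uz zu mul1r.
Qed.

Lemma qnil_corner_qnil q x :
  q * q = q -> in_corner q x -> qnil x -> corner_qnil q x.
Proof.
move=> qq xcorner xqnil; split=> // l l0.
have [qx xq] := (in_cornerP qq x).1 xcorner.
have [z [uz zu]] := xqnil l l0.
have -> : l *: q - x = (l%:A - x) * q by rewrite mulrBl xq -scalerAl mul1r.
apply: (corner_invertible_mulr qq _ uz zu).
by rewrite /GRing.comm mulrBl mulrBr xq qx -scalerAl -scalerAr mul1r mulr1.
Qed.

Lemma pmatrix_triangular p x y :
  p * p = p -> p * x = x -> p * y = 0 -> y * p = 0 ->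
  pmatrix p (x + y) = (x * p, x * (1 - p), 0, y).
Proof.
move=> pp px py yp.
have qx : (1 - p) * x = 0 by rewrite mulrBl mul1r px subrr.
have qy : (1 - p) * y = y by rewrite mulrBl mul1r py subr0.
have yq : y * (1 - p) = y by rewrite mulrBr mulr1 yp subr0.
by rewrite /pmatrix !(mulrDr p) !(mulrDr (1 - p)) px py qx qy addr0 add0r yp yq.
Qed.

Section CoreInverse.
Variables x y : A.
Hypothesis xy : is_core_inverse x y.

Lemma core_projMx : x * y * x = x.
Proof. by case: xy. Qed.

Lemma core_projMy : x * y * y = y.
Proof.
have [_ /(_ 1) [w yE] _ _ _] := xy; rewrite mulr1 in yE.
by rewrite {2}yE mulrA core_projMx -yE.
Qed.

Lemma core_invMstar_proj : y * star (x * y) = y.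
Proof.
have [_ _ _ /(_ 1) [w yE] _] := xy; rewrite mul1r in yE.
by rewrite {1}yE -mulrA -starM core_projMx -yE.
Qed.

Lemma core_proj_star : star (x * y) = x * y.
Proof.
have pE : x * y = x * y * star (x * y) by rewrite -mulrA core_invMstar_proj.
by rewrite pE starM starK -mulrA core_invMstar_proj.
Qed.

Lemma core_invMproj : y * (x * y) = y.
Proof. by rewrite -core_proj_star core_invMstar_proj. Qed.

Lemma core_proj_idem : x * y * (x * y) = x * y.
Proof. by rewrite mulrA core_projMx. Qed.

Lemma core_is_projection : is_projection (x * y).
Proof. by split; [exact: core_proj_idem | exact: core_proj_star]. Qed.

Lemma core_invMxx : y * x * x = x.
Proof.
have [_ _ /(_ 1) [w xE] _ _] := xy; rewrite mulr1 in xE.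
by rewrite {2}xE mulrA -(mulrA y) core_invMproj -xE.
Qed.

Lemma core_corner_invertible : corner_invertible (x * y) (x * (x * y)).
Proof.
have cornerP := in_cornerP core_proj_idem.
split; first by apply/cornerP; rewrite mulrA core_projMx -mulrA core_proj_idem.
exists y; split; first exact/cornerP/(conj core_projMy core_invMproj).
by split; [rewrite -mulrA core_projMy | rewrite !mulrA core_invMxx].
Qed.

End CoreInverse.

End Corners.

Theorem lemma4p1 (R : realType) (A : banachStarAlgType R) (a a1 a2 : A)
    (ha : a = a1 + a2)
    (h12 : star a1 * a2 = 0) (h21 : a2 * a1 = 0)
    (hcore : core_invertible a1) (hq : qnil a2)
    (a1c : A) (ha1c : is_core_inverse a1 a1c) :
  let p := a1 * a1c in
  is_projection p /\
  exists t s n : A,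
    pmatrix p a = (t, s, 0, n) /\
    corner_invertible p t /\ corner_qnil (1 - p) n.
Proof.
move=> p; have [pp pstar] : is_projection p := core_is_projection ha1c.
have pa2 : p * a2 = 0 by rewrite -pstar /p starM -mulrA h12 mulr0.
have a2p : a2 * p = 0 by rewrite /p mulrA h21 mul0r.
split=> //; exists (a1 * p), (a1 * (1 - p)), a2.
split; first by rewrite ha pmatrix_triangular // core_projMx.
split; first exact: core_corner_invertible.
apply: qnil_corner_qnil => //; first exact: idem_compl.
apply/(in_cornerP (idem_compl pp)).
by rewrite mulrBl mulrBr mul1r mulr1 pa2 a2p !subr0.
Qed.
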